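(* Let $q=3^r>3$, and let $$\bar f_2(x_1,x_2)=t\bigl(x_1^{q-4}+x_2^{q-2}\bigr).$$ Then the polynomial $t\bigl(\bar f_2(x_1,x_2)+x_3^{q-2}\bigr)\in\mathbb{F}_q[x_1,x_2,x_3]$, reduced modulo $x_j^q-x_j$, has degree $3(q-2)$.
   Context: $\mathbb{F}_q$ is the finite field with $q$ elements, and $$t(x)=x+\sum_{k=0}^{q-2}x^k\in\mathbb{F}_q[x];$$ this polynomial swaps $0$ and $1$ and fixes every other element. Degree means the total degree of the reduced representative (degree $<q$ in each variable). *)

From HB Require Import structures.
From mathcomp Require Import all_boot all_order all_algebra all_field.
From mathcomp Require Import mpoly.
Set Implicit Arguments. Unset Strict Implicit. Unset Printing Implicit Defensive.
Import GRing.Theory.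
Local Open Scope ring_scope.

Definition tpoly (R : ringType) (q : nat) (x : R) : R :=
  x + \sum_(k < q.-1) x ^+ k.

(* Reduction of an exponent e modulo x^q = x: 0 stays 0, e>0 becomes the
   unique e' in {1..q-1} with e' = e mod (q-1). *)
Definition red_exp (q e : nat) : nat :=
  if e == 0%N then 0%N else ((e.-1 %% q.-1).+1)%N.

Definition red_mnm (n q : nat) (m : 'X_{1..n}) : 'X_{1..n} :=
  [multinom red_exp q (m i) | i < n].

(* The reduced representative of p modulo the ideal (x_j^q - x_j)_j:
   replace each monomial by its reduction. *)
Definition reduce (n : nat) (R : comRingType) (q : nat) (p : {mpoly R[n]})
  : {mpoly R[n]} :=
  \sum_(m <- msupp p) p@_m *: 'X_[red_mnm q m].

(* Total degree of a polynomial (degree of 0 taken as 0). *)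
Definition tdeg (n : nat) (R : comRingType) (p : {mpoly R[n]}) : nat :=
  (msize p).-1.

From HB Require Import structures.
From mathcomp Require Import all_boot all_order all_algebra all_field.
From mathcomp Require Import mpoly.
From mathcomp Require Import ring zify.
Set Implicit Arguments. Unset Strict Implicit. Unset Printing Implicit Defensive.
Import GRing.Theory.
Local Open Scope ring_scope.

(* Over F_q, for 0 < m_i <= q - 1 the coefficient of x^m in the reduction of a polynomial P in
   n variables is (-1)^n sum_v P(v) prod_i v_i^(q-1-m_i), because sum_x x^j is -1 when j > 0 and
   q - 1 divides j, and 0 otherwise.  In characteristic 3, x^(q-2) = x^-1 and x^(q-4) = x^-3, so
   P evaluates to f(a,b,c) = t(t(a^-3 + b^-1) + c^-1), a bijection in each variable: the sum
   vanishes as soon as some m_i = q - 1, which bounds the degree of the reduction by 3(q-2).  For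
   m = (q-2,q-2,q-2) the sum is sum f(a,b,c) abc; summing over c, then b, then a by partial
   fractions (with 0^-1 = 0) gives -14 = 1, so this monomial survives. *)

Lemma natr_card_finNzRing (R : finNzRingType) : (#|R|%:R : R) = 0.
Proof.
have : \sum_(x : R) x = \sum_(x : R) (1 + x) := reindex_inj (addrI 1).
rewrite big_split sumr_const cardT -cardE -mulr_natl mulr1 => /eqP.
by rewrite eq_sym -subr_eq0 addrK => /eqP.
Qed.

Section FiniteField.

Variable F : finFieldType.
Local Notation q := #|F|.

Lemma card_finField_pred_gt0 : (0 < q.-1)%N.
Proof. by have := finNzRing_gt1 F; case: q. Qed.

Lemma natr_card_pred : (q.-1%:R : F) = -1.
Proof.
apply/eqP; rewrite -subr_eq0 opprK natr1 prednK ?natr_card_finNzRing //.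
exact: ltnW (finNzRing_gt1 F).
Qed.

Lemma expf_card_pred (x : F) : x != 0 -> x ^+ q.-1 = 1.
Proof.
move=> x0; apply: (mulIf x0); rewrite mul1r -exprSr prednK ?expf_card //.
exact: ltnW (finNzRing_gt1 F).
Qed.

Lemma sum_indicator (d : F) (f : F -> F) : \sum_c (c == d)%:R * f c = f d.
Proof.
rewrite (bigD1 d) //= eqxx mul1r big1 ?addr0 // => c /negbTE ->.
by rewrite mul0r.
Qed.

Lemma exists_expf_neq1 j : ~~ (q.-1 %| j)%N -> exists2 a : F, a != 0 & a ^+ j != 1.
Proof.
(* Otherwise the q - 1 nonzero elements would all be roots of X^(j %% (q - 1)) - 1. *)
move=> Qj; apply/exists_inP; rewrite -negb_forall_in; apply/negP => /forall_inP all1.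
have k0 : (0 < j %% q.-1)%N by rewrite lt0n -/(dvdn _ _).
have p0 : 'X^(j %% q.-1) - 1 != 0 :> {poly F}.
  by rewrite -size_poly_eq0 size_XnsubC.
suff rts : all (root ('X^(j %% q.-1) - 1)) (enum (predC1 (0 : F))).
  have := max_poly_roots p0 rts (enum_uniq _).
  by rewrite size_XnsubC // -cardE cardC1 ltnS leqNgt ltn_pmod // card_finField_pred_gt0.
apply/allP => x; rewrite mem_enum inE => x0.
rewrite /root !hornerE subr_eq0 -(eqP (all1 x x0)).
by rewrite {2}(divn_eq j q.-1) exprD mulnC exprM expf_card_pred // expr1n mul1r.
Qed.

Lemma sum_expr j :
  \sum_(x : F) x ^+ j = if (0 < j)%N && (q.-1 %| j)%N then -1 else 0.
Proof.
case: j => [|j] /=.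
  by under eq_bigr do rewrite expr0; rewrite sumr_const cardT -cardE natr_card_finNzRing.
case: ifP => Qj.
  rewrite (eq_bigr (fun x => 1 - (x == 0)%:R * 1)) => [|x _].
    by rewrite sumrB sumr_const cardT -cardE natr_card_finNzRing sum_indicator sub0r.
  case: eqVneq => [->|x0]; first by rewrite expr0n mul1r subrr.
  by rewrite mul0r subr0 -(divnK Qj) mulnC exprM expf_card_pred // expr1n.
have [a a0 aj] := exists_expf_neq1 (negbT Qj).
have : \sum_(x : F) x ^+ j.+1 = a ^+ j.+1 * \sum_(x : F) x ^+ j.+1.
  rewrite [LHS](reindex_inj (mulfI a0)) mulr_sumr.
  by apply: eq_bigr => x _; rewrite exprMn.
move/eqP; rewrite -subr_eq0 -{1}[\sum_x _]mul1r -mulrBl mulf_eq0 subr_eq0 eq_sym.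
by rewrite (negbTE aj) => /eqP.
Qed.

Lemma sum_expr_eq0 j : (0 < j < q.-1)%N -> \sum_(x : F) x ^+ j = 0.
Proof.
case/andP=> j0 jQ; rewrite sum_expr j0 /=.
by case: ifP => // /(dvdn_leq j0); rewrite leqNgt jQ.
Qed.

Lemma sum_exprVn_eq0 j : (0 < j < q.-1)%N -> \sum_(x : F) x^-1 ^+ j = 0.
Proof.
move=> j_bd; rewrite (reindex_inj invr_inj).
by under eq_bigr do rewrite invrK; rewrite sum_expr_eq0.
Qed.

Lemma sum_inj_eq0 (f : F -> F) : (2 < q)%N -> injective f -> \sum_x f x = 0.
Proof.
move=> q_gt2 f_inj.
have -> : \sum_x f x = \sum_x x by rewrite [RHS](reindex_inj f_inj).
rewrite (eq_bigr (fun x => x ^+ 1)) => [|x _]; last exact: expr1.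
by rewrite sum_expr_eq0 //; lia.
Qed.

Lemma tpoly_finField (y : F) : tpoly q y = y + (y == 0)%:R - (y == 1)%:R.
Proof.
rewrite /tpoly; have [->|y0] := eqVneq y 0.
  rewrite (eq_sym 0) oner_eq0 subr0 !add0r.
  case: q.-1 card_finField_pred_gt0 => // n _.
  by rewrite big_ord_recl expr0 big1 ?addr0 // => i _; rewrite expr0n.
have [->|y1] := eqVneq y 1.
  by under eq_bigr do rewrite expr1n; rewrite sumr_const card_ord natr_card_pred addr0.
have : (y - 1) * \sum_(k < q.-1) y ^+ k = 0 by rewrite -subrX1 expf_card_pred // subrr.
by move/eqP; rewrite mulf_eq0 subr_eq0 (negbTE y1) => /eqP ->; rewrite !mulr0n addr0 subr0.
Qed.

Lemma tpolyK : involutive (tpoly q : F -> F).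
Proof.
have tE (z : F) : tpoly q z = if z == 0 then 1 else if z == 1 then 0 else z.
  rewrite tpoly_finField; have [->|z0] := eqVneq z 0.
    by rewrite (eq_sym 0) oner_eq0 mulr0n add0r subr0.
  by have [->|z1] := eqVneq z 1; rewrite ?mulr1n mulr0n addr0 ?subrr ?subr0.
move=> y; rewrite !tE; case: (eqVneq y 0) => [->|y0]; first by rewrite oner_eq0 eqxx.
by case: (eqVneq y 1) => [->|y1]; rewrite ?eqxx // (negbTE y0) (negbTE y1).
Qed.

Lemma tpoly_inj : injective (tpoly q : F -> F).
Proof. exact: inv_inj tpolyK. Qed.

Lemma expr_card_subSVn (x : F) k : (0 < k < q.-1)%N -> x ^+ (q - k.+1) = x^-1 ^+ k.
Proof.
case/andP=> k_gt0 kQ; have [->|x0] := eqVneq x 0.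
  by rewrite invr0 !expr0n !eqn0Ngt k_gt0 (_ : (0 < q - k.+1)%N) //; lia.
apply: (mulIf (expf_neq0 k x0)); rewrite -exprD -exprMn mulVf // expr1n.
by rewrite (_ : (q - k.+1 + k = q.-1)%N) ?expf_card_pred //; lia.
Qed.

Lemma sum_inv_eq0 : (2 < q)%N -> \sum_(x : F) x^-1 = 0.
Proof. by move=> q_gt2; apply: sum_inj_eq0 q_gt2 invr_inj. Qed.

Lemma sum_indicator1 (d : F) : \sum_(c : F) (c == d)%:R = 1 :> F.
Proof. by under eq_bigr do rewrite -[_%:R]mulr1; rewrite sum_indicator. Qed.

Definition psi (v : F) : F := - v^-1 - (1 - v)^-1.

Lemma psi_tpoly (y : F) : psi (tpoly q y) = psi y.
Proof.
rewrite tpoly_finField /psi; have [->|y0] := eqVneq y 0.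
  by rewrite (eq_sym 0) oner_eq0 mulr1n mulr0n add0r subr0 subrr invr0 invr1 subr0 oppr0 sub0r.
have [->|y1] := eqVneq y 1; last by rewrite mulr0n addr0 subr0.
by rewrite mulr0n mulr1n addr0 !subrr !subr0 !invr0 !invr1 oppr0 sub0r addr0.
Qed.

Lemma sum_tpoly_addV_mul (v : F) : (2 < q)%N ->
  \sum_(c : F) tpoly q (v + c^-1) * c = -1 + psi v.
Proof.
move=> q_gt2; rewrite (reindex_inj invr_inj); under eq_bigr do rewrite invrK.
have eq_shift (c w : F) : (v + c == w) = (c == w - v).
  by rewrite -(inj_eq (addIr (- v))) addrC addKr.
have cVc (c : F) : c * c^-1 = 1 - (c == 0)%:R.
  by have [->|c0] := eqVneq c 0; rewrite ?invr0 ?mulr0 ?subrr // mulfV // subr0.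
under eq_bigr => c _ do rewrite tpoly_finField !eq_shift sub0r !mulrDl mulNr cVc.
rewrite !big_split /= !sumrN sumr_const cardT -cardE natr_card_finNzRing.
by rewrite sum_indicator1 !sum_indicator -mulr_sumr sum_inv_eq0 // /psi invrN; ring.
Qed.

(* Partial fractions, corrected at the two poles [b = 0] and [b = - c] where [x^-1] is [0]. *)
Lemma sum_inv_mul_inv_add (c : F) : (3 < q)%N ->
  \sum_(b : F) b^-1 * (c + b)^-1 = 2%:R * c^-1 ^+ 2.
Proof.
move=> q_gt3; have [->|c0] := eqVneq c 0.
  under eq_bigr do rewrite add0r -expr2.
  by rewrite sum_exprVn_eq0 ?invr0 ?expr0n ?mulr0 //; lia.
have pfrac (b : F) : b^-1 * (c + b)^-1 =
    c^-1 * (b^-1 - (c + b)^-1) + c^-1 ^+ 2 * ((b == 0)%:R + (b == - c)%:R).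
  have [->|b0] := eqVneq b 0.
    by rewrite eq_sym oppr_eq0 (negbTE c0) invr0 addr0 mulr1n mulr0n; ring.
  have [->|bNc] := eqVneq b (- c).
    by rewrite subrr invr0 invrN mulr1n mulr0n; ring.
  have cb0 : c + b != 0 by rewrite addr_eq0 -eqr_oppLR eq_sym.
  by rewrite !mulr0n addr0 mulr0 addr0; field; rewrite c0 b0 cb0.
under eq_bigr do rewrite pfrac.
rewrite big_split /= -!mulr_sumr sumrB big_split /= !sum_indicator1.
have q_gt2 := ltnW q_gt3.
by rewrite sum_inv_eq0 ?(sum_inj_eq0 _ (inj_comp invr_inj (addrI c))) //; ring.
Qed.

Lemma sum_inv_mul_inv_sub (d : F) : (3 < q)%N ->
  \sum_(b : F) b^-1 * (d - b)^-1 = - (2%:R * d^-1 ^+ 2).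
Proof.
move=> q_gt3; under eq_bigr do rewrite -[d - _]opprK opprB invrN mulrN addrC.
by rewrite sumrN sum_inv_mul_inv_add // invrN sqrrN.
Qed.

Lemma sum_mul_psi_tpoly (d : F) : (3 < q)%N ->
  \sum_(b : F) b * (-1 + psi (tpoly q (d + b^-1))) =
  2%:R * ((1 - d)^-1 ^+ 2 - d^-1 ^+ 2).
Proof.
move=> q_gt3; have psiE (b : F) : b^-1 * (-1 + psi (d + b)) =
    - b^-1 - b^-1 * (d + b)^-1 - b^-1 * ((1 - d) - b)^-1.
  by rewrite /psi (_ : 1 - (d + b) = 1 - d - b); ring.
rewrite (reindex_inj invr_inj); under eq_bigr do rewrite invrK psi_tpoly psiE.
rewrite !sumrB sumrN (sum_inv_eq0 (ltnW q_gt3)).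
by rewrite sum_inv_mul_inv_add ?sum_inv_mul_inv_sub //; ring.
Qed.

Lemma sum_subrV_expr_eq0 j : (0 < j < q.-1)%N -> \sum_(a : F) (1 - a)^-1 ^+ j = 0.
Proof.
move=> j_gt0; have subr_inj : injective (fun a : F => 1 - a) by apply: can_inj (subKr 1).
by rewrite (reindex_inj subr_inj); under eq_bigr do rewrite subKr; rewrite sum_exprVn_eq0.
Qed.

Lemma inv_mul_subrV_expr (a : F) n : a != 0 -> a != 1 ->
  a^-1 * (1 - a)^-1 ^+ n = a^-1 + \sum_(k < n) (1 - a)^-1 ^+ k.+1.
Proof.
move=> a0 a1; have a1' : 1 - a != 0 by rewrite subr_eq0 eq_sym.
elim: n => [|n IHn]; first by rewrite expr0 mulr1 big_ord0 addr0.
rewrite exprSr mulrA IHn mulrDl big_ord_recl addrA; congr (_ + _).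
  by field; rewrite a0 a1'.
by rewrite mulr_suml; apply: eq_bigr => k _; rewrite -exprSr.
Qed.

Lemma sum_inv_mul_subrV_expr n : (0 < n < q.-1)%N ->
  \sum_(a : F) a^-1 * (1 - a)^-1 ^+ n = - n.+1%:R.
Proof.
case/andP=> n_gt0 nQ.
have pfrac (a : F) : a^-1 * (1 - a)^-1 ^+ n =
    a^-1 + \sum_(k < n) (1 - a)^-1 ^+ k.+1 - n%:R * (a == 0)%:R - (a == 1)%:R.
  have [->|a0] := eqVneq a 0.
    under eq_bigr do rewrite subr0 invr1 expr1n.
    by rewrite eq_sym oner_eq0 invr0 mul0r sumr_const card_ord mulr1 mulr0n subr0 add0r subrr.
  have [->|a1] := eqVneq a 1.
    under eq_bigr do rewrite subrr invr0 expr0n.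
    rewrite big1 // subrr invr0 expr0n eqn0Ngt n_gt0 invr1 /=.
    by rewrite !mulr0n mulr1n mulr0 addr0 mulr0 subr0 subrr.
  by rewrite inv_mul_subrV_expr // !mulr0n mulr0 !subr0.
under eq_bigr do rewrite pfrac.
rewrite !sumrB big_split /= sum_inv_eq0; last by lia.
rewrite add0r exchange_big big1 => [|k _]; last first.
  by rewrite sum_subrV_expr_eq0 //; have := ltn_ord k; lia.
by rewrite -mulr_sumr !sum_indicator1 mulr1 -natr1 sub0r opprD.
Qed.

Lemma sum3_mul_monomial_eq0 (g : F -> F -> F -> F) e1 e2 e3 : (2 < q)%N ->
  (forall b c, injective (fun a => g a b c)) ->
  (forall a c, injective (fun b => g a b c)) ->
  (forall a b, injective (g a b)) -> [|| e1 == 0, e2 == 0 | e3 == 0]%N ->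
  \sum_a \sum_b \sum_c g a b c * (a ^+ e1 * b ^+ e2 * c ^+ e3) = 0.
Proof.
move=> q_gt2 g1 g2 g3; case/or3P=> /eqP ->.
- rewrite exchange_big big1 // => b _; rewrite exchange_big big1 // => c _.
  under eq_bigr do rewrite expr0 mul1r.
  by rewrite -mulr_suml (sum_inj_eq0 q_gt2 (g1 b c)) mul0r.
- rewrite big1 // => a _; rewrite exchange_big big1 // => c _.
  under eq_bigr do rewrite expr0 mulr1.
  by rewrite -mulr_suml (sum_inj_eq0 q_gt2 (g2 a c)) mul0r.
- rewrite big1 // => a _; rewrite big1 // => b _.
  under eq_bigr do rewrite expr0 mulr1.
  by rewrite -mulr_suml (sum_inj_eq0 q_gt2 (g3 a b)) mul0r.
Qed.

End FiniteField.

Section Reduction.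

Variables (R : comNzRingType) (n q : nat).

Lemma red_exp_le e : (0 < q.-1)%N -> (red_exp q e <= q.-1)%N.
Proof. by move=> q_gt1; rewrite /red_exp; case: e => //= e; rewrite ltn_pmod. Qed.

Lemma msupp_reduce_le (p : {mpoly R[n]}) m : (0 < q.-1)%N ->
  m \in msupp (reduce q p) -> forall i, (m i <= q.-1)%N.
Proof.
move=> q_gt1 + i; apply: contraTT; rewrite -ltnNge => mi_gt.
rewrite mcoeff_msupp negbK /reduce raddf_sum big1 // => m' _.
change ((p@_m' *: 'X_[red_mnm q m'])@_m = 0); rewrite mcoeffZ mcoeffX.
case: eqP => [red_m|]; last by rewrite mulr0.
by move: mi_gt; rewrite -red_m mnmE ltnNge red_exp_le.
Qed.

Lemma red_exp_eq e k : (0 < k <= q.-1)%N ->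
  (red_exp q e == k) = (0 < e + (q.-1 - k))%N && (q.-1 %| e + (q.-1 - k))%N.
Proof.
case/andP=> k_gt0 kQ; rewrite /red_exp; case: e => [|e] /=.
  rewrite add0n eq_sym (gtn_eqF k_gt0).
  case: (posnP (q.-1 - k)) => [-> //|d_gt0] /=.
  by apply/esym/negP => /(dvdn_leq d_gt0); lia.
have -> : (e.+1 + (q.-1 - k) = e %/ q.-1 * q.-1 + ((e %% q.-1).+1 + (q.-1 - k)))%N.
  by have := divn_eq e q.-1; lia.
rewrite dvdn_addr ?dvdn_mull //.
have rQ : (e %% q.-1 < q.-1)%N by rewrite ltn_pmod //; lia.
apply/eqP/dvdnP => [<- | [c]]; first by exists 1%N; lia.
by case: c => [|[|c]]; lia.
Qed.

Lemma tdeg_eq (p : {mpoly R[n]}) N :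
  (forall m, m \in msupp p -> (mdeg m <= N)%N) ->
  (exists2 m, m \in msupp p & mdeg m = N) -> tdeg p = N.
Proof.
move=> deg_le [m pm mN]; rewrite /tdeg -mN; apply/eqP; rewrite -eqSS prednK; last first.
  exact: leq_ltn_trans (msize_mdeg_lt pm).
rewrite eqn_leq msize_mdeg_lt // andbT msizeE.
by apply/bigmax_leqP_seq => m' pm' _; rewrite ltnS mN deg_le.
Qed.

End Reduction.

Section ReductionFiniteField.

Variables (F : finFieldType) (n : nat).
Local Notation q := #|F|.

Lemma sum_expr_red_exp e k : (0 < k <= q.-1)%N ->
  \sum_(x : F) x ^+ (e + (q.-1 - k)) = - (red_exp q e == k)%:R.
Proof. by move=> k_bd; rewrite sum_expr red_exp_eq //; case: ifP; rewrite ?oppr0. Qed.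

Lemma sum_prod_expr_red_mnm (m m' : 'X_{1..n}) : (forall i, 0 < m i <= q.-1)%N ->
  \sum_(v : {ffun 'I_n -> F}) \prod_i v i ^+ (m' i + (q.-1 - m i)) =
  (-1) ^+ n * (red_mnm q m' == m)%:R.
Proof.
move=> m_bd; rewrite -(bigA_distr_bigA (fun i (x : F) => x ^+ (m' i + (q.-1 - m i)))) /=.
under eq_bigr do rewrite sum_expr_red_exp //.
rewrite prodrN card_ord; congr (_ * _).
have [<-|neq] := eqVneq (red_mnm q m') m.
  by rewrite big1 // => i _; rewrite mnmE eqxx.
have /existsP [i ne_i] : [exists i, red_exp q (m' i) != m i].
  apply: contraNT neq => /existsPn all_eq; apply/eqP/mnmP => i.
  by rewrite mnmE; apply/eqP/negPn/all_eq.
by apply/eqP/prodf_eq0; exists i => //; rewrite (negbTE ne_i) mulr0n.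
Qed.

Lemma mcoeff_reduce (p : {mpoly F[n]}) (m : 'X_{1..n}) : (forall i, 0 < m i <= q.-1)%N ->
  (reduce q p)@_m =
  (-1) ^+ n * \sum_(v : {ffun 'I_n -> F}) p.@[v] * \prod_i v i ^+ (q.-1 - m i).
Proof.
move=> m_bd; rewrite /reduce raddf_sum /=; under eq_bigr do rewrite mcoeffZ mcoeffX.
under [in RHS]eq_bigr do rewrite mevalE mulr_suml.
rewrite exchange_big mulr_sumr; apply: eq_bigr => m' _.
have sign2 : (-1) ^+ n * (-1) ^+ n = 1 :> F by rewrite -expr2 sqrr_sign.
transitivity ((-1) ^+ n *
    \sum_(v : {ffun 'I_n -> F}) p@_m' * \prod_i v i ^+ (m' i + (q.-1 - m i))).
  rewrite -mulr_sumr sum_prod_expr_red_mnm // mulrCA [_ ^+ n * (_ * _)]mulrA.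
  by rewrite sign2 mul1r.
congr (_ * _); apply: eq_bigr => v _.
by rewrite -mulrA -big_split /=; congr (_ * _); apply: eq_bigr => i _; rewrite exprD.
Qed.

End ReductionFiniteField.

Lemma sum_ffun3 (R : nmodType) (T : finType) (h : {ffun 'I_3 -> T} -> R) :
  \sum_f h f = \sum_a \sum_b \sum_c h [ffun i => tnth [tuple a; b; c] i].
Proof.
under [RHS]eq_bigr do rewrite pair_big /=.
rewrite pair_big /=.
pose fin3 (x : T * (T * T)) := [ffun i => tnth [tuple x.1; x.2.1; x.2.2] i].
pose coord3 (f : {ffun 'I_3 -> T}) := (f (inord 0), (f (inord 1), f (inord 2))).
have fin3K : cancel coord3 fin3.
  move=> f; apply/ffunP => -[[|[|[|k]]] lt_k3] //; rewrite ffunE /tnth /=;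
    by congr (f _); apply: val_inj; rewrite /= inordK.
have coord3K : cancel fin3 coord3.
  by move=> [a [b c]]; rewrite /coord3 !ffunE /tnth /= !inordK.
rewrite (reindex coord3) /=; last by apply: onW_bij; exists fin3.
by apply: eq_bigr => f _; congr h; exact: esym (fin3K f).
Qed.

Lemma rmorph_tpoly (R S : nzRingType) (f : {rmorphism R -> S}) q (x : R) :
  f (tpoly q x) = tpoly q (f x).
Proof. by rewrite rmorphD rmorph_sum; under eq_bigr do rewrite rmorphXn. Qed.

Section CharacteristicThree.

Variable F : finFieldType.
Hypothesis F3 : 3 \in [pchar F].
Local Notation q := #|F|.

Lemma expr3_inj : injective (fun x : F => x ^+ 3).
Proof. by move=> x y /=; rewrite -!(pFrobenius_autE F3); apply: fmorph_inj. Qed.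

Lemma subr_expr3 (a : F) : (1 - a) ^+ 3 = 1 - a ^+ 3.
Proof. by rewrite -!(pFrobenius_autE F3) rmorphB rmorph1. Qed.

Definition f3bar (a b c : F) : F := tpoly q (tpoly q (a^-1 ^+ 3 + b^-1) + c^-1).

Lemma f3bar_inj1 b c : injective (fun a => f3bar a b c).
Proof.
move=> a a' /tpoly_inj/addIr/tpoly_inj/addIr/expr3_inj; exact: invr_inj.
Qed.

Lemma f3bar_inj2 a c : injective (fun b => f3bar a b c).
Proof. by move=> b b' /tpoly_inj/addIr/tpoly_inj/addrI/invr_inj. Qed.

Lemma f3bar_inj3 a b : injective (f3bar a b).
Proof. by move=> c c' /tpoly_inj/addrI/invr_inj. Qed.

Lemma sum_f3bar_mul : (8 < q)%N ->
  \sum_a \sum_b \sum_c f3bar a b c * (a * b * c) = 1.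
Proof.
move=> q_gt8; have q_gt3 : (3 < q)%N by lia.
transitivity (\sum_(a : F) a * \sum_(b : F) b * (-1 + psi (tpoly q (a^-1 ^+ 3 + b^-1)))).
  apply: eq_bigr => a _; rewrite mulr_sumr; apply: eq_bigr => b _.
  rewrite -sum_tpoly_addV_mul ?(ltnW q_gt3) // !mulr_sumr; apply: eq_bigr => c _.
  by rewrite /f3bar; ring.
under eq_bigr do rewrite sum_mul_psi_tpoly //.
rewrite (reindex_inj invr_inj); under eq_bigr do rewrite !invrK -subr_expr3 -!exprVn -!exprM.
have split_term (a : F) : a^-1 * (2%:R * ((1 - a)^-1 ^+ (3 * 2) - a^-1 ^+ (3 * 2))) =
    2%:R * (a^-1 * (1 - a)^-1 ^+ 6) - 2%:R * a^-1 ^+ 7 by ring.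
under eq_bigr do rewrite split_term.
rewrite sumrB -!mulr_sumr sum_inv_mul_subrV_expr ?sum_exprVn_eq0; try lia.
apply/eqP; rewrite -subr_eq0 (_ : _ - 1 = - (3%:R * 5%:R)); last by ring.
by rewrite (pcharf0 F3) mul0r oppr0.
Qed.

Definition f3poly : {mpoly F[3]} :=
  tpoly q (tpoly q ('X_(@Ordinal 3 0 isT) ^+ (q - 4) + 'X_(@Ordinal 3 1 isT) ^+ (q - 2))
           + 'X_(@Ordinal 3 2 isT) ^+ (q - 2)).

Lemma meval_f3poly (a b c : F) : (4 < q)%N ->
  f3poly.@[[ffun i => tnth [tuple a; b; c] i]] = f3bar a b c.
Proof.
move=> q_gt4; rewrite /f3poly rmorph_tpoly rmorphD rmorph_tpoly rmorphD !rmorphXn /=.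
rewrite !mevalXU !ffunE /=.
rewrite (expr_card_subSVn _ (k := 3)) ?(expr_card_subSVn _ (k := 1)) ?expr1 //; lia.
Qed.

Lemma mcoeff_reduce_f3poly (m : 'X_{1..3}) : (4 < q)%N ->
  (forall i, 0 < m i <= q.-1)%N ->
  (reduce q f3poly)@_m = - \sum_a \sum_b \sum_c f3bar a b c *
     (a ^+ (q.-1 - m ord0) * b ^+ (q.-1 - m (lift ord0 ord0)) *
      c ^+ (q.-1 - m (lift ord0 (lift ord0 ord0)))).
Proof.
move=> q_gt4 m_bd; rewrite mcoeff_reduce // sum_ffun3 -signr_odd expr1 mulN1r.
congr (- _).
apply: eq_bigr => a _; apply: eq_bigr => b _; apply: eq_bigr => c _.
rewrite meval_f3poly // !big_ord_recl big_ord0 !ffunE mulr1 mulrA.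
by rewrite !(tnth_nth a).
Qed.

Lemma msupp_reduce_f3poly_mdeg_le m : (8 < q)%N ->
  m \in msupp (reduce q f3poly) -> (mdeg m <= 3 * (q - 2))%N.
Proof.
move=> q_gt8 supp_m; have m_le := msupp_reduce_le (card_finField_pred_gt0 F) supp_m.
rewrite leqNgt; apply: contraTN supp_m => deg_gt; rewrite mcoeff_msupp negbK.
have m_gt0 i : (0 < m i)%N.
  move: deg_gt; rewrite mdegE (bigD1 i) //=; set others := bigop _ _ _.
  have : (others <= 2 * q.-1)%N.
    apply: leq_trans (leq_sum _ (fun j _ => m_le j)) _.
    by rewrite (sum_nat_const (predC1 i)) cardC1 card_ord.
  (* [set] identifies copies of [#|F|] elaborated through different coercion paths. *)
  by move: q_gt8; set Q := #|F|; lia.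
rewrite mcoeff_reduce_f3poly => [||i]; last by rewrite m_gt0 m_le.
  2: by lia.
rewrite sum3_mul_monomial_eq0 ?oppr0 //;
  [lia | exact: f3bar_inj1 | exact: f3bar_inj2 | exact: f3bar_inj3 |].
move: deg_gt; rewrite mdegE !big_ord_recl big_ord0.
have := m_le ord0; have := m_le (lift ord0 ord0); have := m_le (lift ord0 (lift ord0 ord0)).
lia.
Qed.

Lemma mcoeff_reduce_f3poly_top : (8 < q)%N ->
  (reduce q f3poly)@_[multinom (q - 2)%N | _ < 3] = -1.
Proof.
move=> q_gt8; rewrite mcoeff_reduce_f3poly => [||i]; last by rewrite mnmE; lia.
  2: by lia.
rewrite !mnmE (_ : (q.-1 - (q - 2) = 1)%N); last by lia.
under eq_bigr do under eq_bigr do under eq_bigr do rewrite !expr1.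
by rewrite sum_f3bar_mul.
Qed.

End CharacteristicThree.

Theorem mainTheorem16 (F : finFieldType) (r : nat) :
  #|F| = (3 ^ r)%N -> (3 < 3 ^ r)%N ->
  let q := #|F| in
  let x1 : {mpoly F[3]} := 'X_(@Ordinal 3 0 isT) in
  let x2 : {mpoly F[3]} := 'X_(@Ordinal 3 1 isT) in
  let x3 : {mpoly F[3]} := 'X_(@Ordinal 3 2 isT) in
  let f2bar := tpoly q (x1 ^+ (q - 4) + x2 ^+ (q - 2)) in
  tdeg (reduce q (tpoly q (f2bar + x3 ^+ (q - 2)))) = (3 * (q - 2))%N.
Proof.
move=> card_F q_gt3 q x1 x2 x3 f2bar.
have F3 : 3 \in [pchar F] := card_finPcharP card_F isT.
have q_gt8 : (8 < q)%N.
  rewrite /q card_F; case: r {card_F} q_gt3 => [|[|r]] // _.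
  by rewrite !expnS mulnA leq_pmulr // expn_gt0.
change (tdeg (reduce q (f3poly F)) = (3 * (q - 2))%N).
apply: tdeg_eq => [m|]; first exact: msupp_reduce_f3poly_mdeg_le.
exists [multinom (q - 2)%N | _ < 3].
  by rewrite mcoeff_msupp mcoeff_reduce_f3poly_top // oppr_eq0 oner_eq0.
by rewrite mdegE; under eq_bigr do rewrite mnmE; rewrite sum_nat_const card_ord.
Qed.
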